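(* $\mathfrak{L}(\mathbf{F}_2)^w_{O(n)} \subsetneq \mathfrak{L}(\mathbf{F}_2\times\mathbf{F}_2)^w_{O(n)}$.
   Context: For a group $G$ with identity $e$, a $G$-automaton is a tuple $(Q,\Sigma,G,\delta,q_0,Q_a)$ where $Q$ is a finite set of states, $\Sigma$ a finite input alphabet, $q_0\in Q$ the initial state, $Q_a\subseteq Q$ the accepting states, and $\delta$ assigns to each $(q,\sigma)\in Q\times(\Sigma\cup\{\varepsilon\})$ a finite set of pairs $(q',m)\in Q\times G$. The register holds an element of $G$, initially $e$; using a transition $(q',m)\in\delta(q,\sigma)$ (one step) the automaton reads $\sigma$ (or nothing), moves to $q'$ and replaces the register content $x$ by $xm$. A word is accepted if some computation reads it entirely and ends in an accepting state with register equal to $e$. A $G$-automaton recognizing $\mathtt{L}$ is weakly $t(n)$ time-bounded if every $x\in\mathtt{L}$ with $|x|=n$ has an accepting computation of at most $t(n)$ steps; $\mathfrak{L}(G)^w_{O(n)}$ is the class of languages recognized by weakly $t(n)$ time-bounded $G$-automata for some $t(n)=O(n)$. $\mathbf{F}_2$ is the free group of rank 2. *)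

From mathcomp Require Import all_boot.
Set Implicit Arguments. Unset Strict Implicit. Unset Printing Implicit Defensive.

Record group := Group {
  gcar :> eqType;
  gmul : gcar -> gcar -> gcar;
  gone : gcar;
  ginv : gcar -> gcar }.

(* A letter (g, s) is generator g (false = a, true = b), inverted iff s.*)
Definition letter := (bool * bool)%type.
Definition linv (x : letter) : letter := (x.1, ~~ x.2).
Definition adj (x y : letter) : bool := y != linv x.
Definition reduced (w : seq letter) : bool := sorted adj w.

Definition ccons (l : letter) (w : seq letter) : seq letter :=
  match w with
  | [::] => [:: l]
  | y :: w' => if y == linv l then w' else l :: w
  end.

Lemma reduced_ccons l w : reduced w -> reduced (ccons l w).
Proof.
case: w => [|y w] //= Hw.
case: eqP => [_|/eqP Hy]; first by case: w Hw => //= z w /andP [].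
by rewrite /reduced /= /adj Hy.
Qed.

Definition F2 : Type := {w : seq letter | reduced w}.

Lemma reduced_foldr (u v : seq letter) : reduced v -> reduced (foldr ccons v u).
Proof. by move=> Hv; elim: u => //= l u IH; apply: reduced_ccons. Qed.

Definition F2mul (u v : F2) : F2 :=
  exist _ (foldr ccons (sval v) (sval u)) (reduced_foldr (sval u) (svalP v)).

Definition F2one : F2 := exist _ [::] (erefl true).

Lemma reduced_inv (u : seq letter) : reduced u -> reduced (rev (map linv u)).
Proof.
rewrite /reduced rev_sorted.
case: u => //= x u; elim: u x => //= y u IH x /andP [Hxy Hu].
rewrite IH // andbT /adj.
apply: contra Hxy; case: x => x1 x2; case: y Hu => y1 y2 _.
by rewrite /linv /= => /eqP [-> ->]; rewrite negbK.
Qed.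

Definition F2inv (u : F2) : F2 :=
  exist _ (rev (map linv (sval u))) (reduced_inv (svalP u)).

Definition F2_group : group := @Group F2 F2mul F2one F2inv.

Definition prod_group (G H : group) : group :=
  @Group (gcar G * gcar H)%type
    (fun x y => (gmul x.1 y.1, gmul x.2 y.2))
    (gone G, gone H)
    (fun x => (ginv x.1, ginv x.2)).

Record Gautomaton (G : group) (Sigma : finType) := GAut {
  state : finType;
  delta : state -> option Sigma -> seq (state * G);  (* None = epsilon *)
  q0 : state;
  accepting : pred state }.
Arguments state {G Sigma} g.
Arguments delta {G Sigma} g.
Arguments q0 {G Sigma} g.
Arguments accepting {G Sigma} g.

(* comp A q x w k q' x' : starting in state q with register x, the
   automaton can read exactly w in exactly k steps and end in state q'
   with register x'. *)
Inductive comp (G : group) (Sigma : finType) (A : Gautomaton G Sigma) :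
  state A -> G -> seq Sigma -> nat -> state A -> G -> Prop :=
| comp_nil q x : comp q x [::] 0 q x
| comp_read q x s w k q' m q'' x'' :
    (q', m) \in delta A q (Some s) ->
    comp q' (gmul x m) w k q'' x'' -> comp q x (s :: w) k.+1 q'' x''
| comp_eps q x w k q' m q'' x'' :
    (q', m) \in delta A q None ->
    comp q' (gmul x m) w k q'' x'' -> comp q x w k.+1 q'' x''.
Arguments comp {G Sigma} A.

Definition accepts_in (G : group) (Sigma : finType) (A : Gautomaton G Sigma)
  (w : seq Sigma) (k : nat) : Prop :=
  exists q, accepting A q /\ comp A (q0 A) (gone G) w k q (gone G).

Definition accepts (G : group) (Sigma : finType) (A : Gautomaton G Sigma)
  (w : seq Sigma) : Prop := exists k, accepts_in A w k.

Definition language (Sigma : Type) := seq Sigma -> Prop.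

Definition recognizes (G : group) (Sigma : finType) (A : Gautomaton G Sigma)
  (L : language Sigma) : Prop := forall w, L w <-> accepts A w.

Definition weakly_time_bounded (G : group) (Sigma : finType)
  (A : Gautomaton G Sigma) (L : language Sigma) (t : nat -> nat) : Prop :=
  forall w, L w -> exists k, k <= t (size w) /\ accepts_in A w k.

Definition bigO_n (t : nat -> nat) : Prop :=
  exists c n0, forall n, n0 <= n -> t n <= c * n.

Definition in_wlin_class (G : group) (Sigma : finType) (L : language Sigma) : Prop :=
  exists (A : Gautomaton G Sigma) (t : nat -> nat),
    bigO_n t /\ recognizes A L /\ weakly_time_bounded A L t.

From mathcomp Require Import all_boot ssralg ssrint zify.
From Stdlib Require Import ClassicalEpsilon.
Set Implicit Arguments. Unset Strict Implicit. Unset Printing Implicit Defensive.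
Import GRing.Theory.

(* The first factor of F_2 x F_2 is a copy of F_2, so every F_2-automaton becomes an
   F_2 x F_2-automaton with the same runs.  For strictness take L = {a^n b^n c^n}: an
   F_2 x F_2-automaton reads its words in real time, keeping a - b in the exponent of
   one generator in the first factor and b - c in the second.
   No F_2-automaton recognizes L.  Along an accepting run on a^n b^n c^n let x_1, x_2
   be the registers after a^n and after a^n b^n, and P their longest common prefix.
   Transition labels have length at most some M, and a register can gain or lose a
   prefix only by passing close to it, so inside each of the three blocks the run
   visits a register P E with |E| <= M.  Between two such visits the run depends on P
   only through a left translation, so a run is summarised by three marks (state, E),
   which range over a finite set.  Two exponents n <> n' with the same marks let us
   exchange the middle segments of their runs, and the resulting accepted words
   cannot both lie in L. *)

(** * The free group *)

Lemma linvK : involutive linv.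
Proof. by case=> g s; rewrite /linv negbK. Qed.

Lemma ccons_linvK l w : reduced w -> ccons l (ccons (linv l) w) = w.
Proof.
case: w => [|y w] /=; first by rewrite eqxx.
rewrite linvK; case: eqP => [->|_] red_w /=; last by rewrite eqxx.
by case: w red_w => [|z w] //= /andP [/negbTE ->].
Qed.

Lemma foldr_ccons_ccons l u v : reduced v ->
  foldr ccons v (ccons l u) = ccons l (foldr ccons v u).
Proof.
case: u => [|y u] red_v //=.
by case: eqP => [->|_] //=; rewrite ccons_linvK // reduced_foldr.
Qed.

Lemma foldr_ccons_id u v : reduced (u ++ v) -> foldr ccons v u = u ++ v.
Proof.
elim: u => //= l u IH red_luv; rewrite IH; last exact: path_sorted red_luv.
by move: red_luv; case: (u ++ v) => //= y s /andP [/negbTE ->].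
Qed.

Lemma F2_mulgA : associative F2mul.
Proof.
move=> [u red_u] [v red_v] [w red_w]; apply: val_inj => /=.
by elim: u {red_u} => //= l u IH; rewrite foldr_ccons_ccons // IH.
Qed.

Lemma F2_mul1g : left_id F2one F2mul.
Proof. by move=> x; apply: val_inj. Qed.

Lemma F2_mulg1 : right_id F2one F2mul.
Proof. by move=> [u red_u]; apply: val_inj; rewrite /= foldr_ccons_id cats0. Qed.

Lemma F2_mulVg : left_inverse F2one F2inv F2mul.
Proof.
move=> [u red_u]; apply: val_inj => /=.
by elim: u {red_u} => //= l u IH; rewrite rev_cons -cats1 foldr_cat /= linvK eqxx.
Qed.

Lemma foldr_ccons_split u v : reduced u ->
  exists u' c v', [/\ u = u' ++ c, foldr ccons v u = u' ++ v' & size c + size v' = size v].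
Proof.
elim: u => [|l u IH] red_lu; first by exists [::], [::], v.
have [u' [c [v' [Eu /= -> sz]]]] := IH (path_sorted red_lu).
rewrite {u IH}Eu in red_lu *.
case: u' red_lu => [|y u'] red_lu.
  case: v' sz => [|y v'] sz; first by exists [:: l], c, [::].
  rewrite /=; case: eqP => _; last by exists [:: l], c, (y :: v').
  by exists [::], (l :: c), v'; split => //=; rewrite -sz /=; lia.
move: red_lu; rewrite /reduced /= => /andP [/negbTE not_cancel _].
by exists [:: l, y & u'], c, v'; rewrite /= not_cancel.
Qed.

Section ExponentSum.
Local Open Scope ring_scope.

Definition exp_weight (g : bool) (l : letter) : int := if l.1 == g then (-1) ^+ l.2 else 0.

Definition exp_sum (g : bool) (w : seq letter) : int := \sum_(l <- w) exp_weight g l.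

Lemma exp_weight_linv g l : exp_weight g (linv l) = - exp_weight g l.
Proof. by case: l => h [] /=; rewrite /exp_weight /=; case: (h == g); rewrite ?oppr0 ?opprK. Qed.

Lemma exp_sum_ccons g l w : exp_sum g (ccons l w) = exp_weight g l + exp_sum g w.
Proof.
rewrite /exp_sum; case: w => [|y w] /=; first by rewrite !big_cons !big_nil.
case: eqP => [->|_]; last by rewrite big_cons.
by rewrite big_cons exp_weight_linv addrA addrN add0r.
Qed.

Lemma exp_sum_mul g (x y : F2) :
  exp_sum g (sval (F2mul x y)) = exp_sum g (sval x) + exp_sum g (sval y).
Proof.
case: x => [u red_u] /=; elim: u {red_u} => [|l u IH] /=; first by rewrite /exp_sum big_nil add0r.
by rewrite exp_sum_ccons IH /exp_sum big_cons addrA.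
Qed.

End ExponentSum.

(** * Computations of G-automata *)

Section Computations.
Variables (G : group) (Sigma : finType) (A : Gautomaton G Sigma).

Definition reach q x w q' y := exists k, comp A q x w k q' y.

Lemma reach_nil q x : reach q x [::] q x.
Proof. by exists 0; apply: comp_nil. Qed.

Lemma reach_step q x o q' m : (q', m) \in delta A q o ->
  reach q x (seq_of_opt o) q' (gmul x m).
Proof.
move=> H; exists 1; case: o H => [s|] H.
- exact: comp_read H (comp_nil _ _).
- exact: comp_eps H (comp_nil _ _).
Qed.

Lemma reach_cons q x o q1 m w q' y : (q1, m) \in delta A q o ->
  reach q1 (gmul x m) w q' y -> reach q x (seq_of_opt o ++ w) q' y.
Proof.
move=> H [k C]; exists k.+1; case: o H => [s|] H.
- exact: comp_read H C.
- exact: comp_eps H C.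
Qed.

Lemma reach_ind (P : state A -> G -> seq Sigma -> state A -> G -> Prop) :
  (forall q x, P q x [::] q x) ->
  (forall q x o q1 m w q' y, (q1, m) \in delta A q o -> reach q1 (gmul x m) w q' y ->
     P q1 (gmul x m) w q' y -> P q x (seq_of_opt o ++ w) q' y) ->
  forall q x w q' y, reach q x w q' y -> P q x w q' y.
Proof.
move=> Pnil Pstep q x w q' y [k].
elim=> {q x w k q' y} [//|q x s w k q1 m q' y H C|q x w k q1 m q' y H C].
- exact: (Pstep _ _ (Some s) _ _ _ _ _ H (ex_intro _ k C)).
- exact: (Pstep _ _ None _ _ _ _ _ H (ex_intro _ k C)).
Qed.

Lemma comp_cat q x u k1 q1 x1 v k2 q2 x2 :
  comp A q x u k1 q1 x1 -> comp A q1 x1 v k2 q2 x2 -> comp A q x (u ++ v) (k1 + k2) q2 x2.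
Proof.
elim=> {q x u k1 q1 x1} // [q x s w k q1 m q3 x3 H _ IH|q x w k q1 m q3 x3 H _ IH] C.
- exact: comp_read H (IH C).
- exact: comp_eps H (IH C).
Qed.

Lemma reach_cat q x u q1 x1 v q2 x2 :
  reach q x u q1 x1 -> reach q1 x1 v q2 x2 -> reach q x (u ++ v) q2 x2.
Proof. by move=> [k1 C1] [k2 C2]; exists (k1 + k2); apply: comp_cat C1 C2. Qed.

Lemma reach_catP q x u v q2 x2 : reach q x (u ++ v) q2 x2 ->
  exists q1 x1, reach q x u q1 x1 /\ reach q1 x1 v q2 x2.
Proof.
move Ew: (u ++ v) => w R; elim/reach_ind: R u Ew => [q3 x3|q3 x3 o q4 m w' q5 y5 H R IH] u Ew.
  by case: u Ew => // /= ->; exists q3, x3; split; apply: reach_nil.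
case: o H Ew => [s|] H /= Ew; last first.
  have [q1 [x1 [R1 R2]]] := IH u Ew; exists q1, x1; split=> //.
  exact: (reach_cons (o:=None)) H R1.
case: u Ew => [|s' u] Ew.
  exists q3, x3; split; first exact: reach_nil.
  by rewrite /= in Ew; rewrite Ew; apply: (reach_cons (o:=Some s)) H R.
case: Ew => -> /IH [q1 [x1 [R1 R2]]]; exists q1, x1; split=> //.
exact: (reach_cons (o:=Some s)) H R1.
Qed.

End Computations.
Arguments reach {G Sigma} A q x w q' y.

Section Translation.
Variables (G : group) (Sigma : finType) (A : Gautomaton G Sigma).
Hypotheses (mulgA : associative (@gmul G)) (mul1g : left_id (gone G) (@gmul G))
  (mulVg : left_inverse (gone G) (@ginv G) (@gmul G)).

Lemma reach_mull g q x w q' y :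
  reach A q x w q' y -> reach A q (gmul g x) w q' (gmul g y).
Proof.
elim/reach_ind=> [q1 x1|q1 x1 o q2 m w1 q3 y3 H _ IH]; first exact: reach_nil.
by apply: reach_cons H _; rewrite -mulgA.
Qed.

Lemma reach_mullK g q x w q' y :
  reach A q (gmul g x) w q' (gmul g y) -> reach A q x w q' y.
Proof. by move/(reach_mull (ginv g)); rewrite !mulgA mulVg !mul1g. Qed.

End Translation.

Section Transfer.
Variables (G K : group) (f : G -> K).
Hypotheses (fM : forall x y, f (gmul x y) = gmul (f x) (f y)) (f1 : f (gone G) = gone K)
  (f_inj : injective f).

Definition map_aut (Sigma : finType) (A : Gautomaton G Sigma) : Gautomaton K Sigma :=
  @GAut K Sigma (state A) (fun q o => [seq (t.1, f t.2) | t <- delta A q o]) (q0 A) (accepting A).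

Section Automaton.
Variables (Sigma : finType) (A : Gautomaton G Sigma).

Lemma comp_map q x w k q' y : comp A q x w k q' y -> comp (map_aut A) q (f x) w k q' (f y).
Proof.
elim=> {q x w k q' y} [q x|q x s w k q1 m q' y H _ IH|q x w k q1 m q' y H _ IH].
- exact: comp_nil.
- by apply: (comp_read (m := f m)); [apply: (map_f _ H) | rewrite -fM].
- by apply: (comp_eps (m := f m)); [apply: (map_f _ H) | rewrite -fM].
Qed.

Lemma comp_map_inv q x' w k q' y' : comp (map_aut A) q x' w k q' y' ->
  forall x, x' = f x -> exists2 y, y' = f y & comp A q x w k q' y.
Proof.
elim=> {q x' w k q' y'} [q x'|q x' s w k q1 m' q' y' H _ IH|q x' w k q1 m' q' y' H _ IH] x Ex.
all: subst x'.
- by exists x => //; apply: comp_nil.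
- case/mapP: H => [[q2 m] H [Eq Em]]; subst q1 m'.
  by have [y -> C] := IH (gmul x m) (esym (fM x m)); exists y => //; apply: comp_read H C.
- case/mapP: H => [[q2 m] H [Eq Em]]; subst q1 m'.
  by have [y -> C] := IH (gmul x m) (esym (fM x m)); exists y => //; apply: comp_eps H C.
Qed.

Lemma accepts_in_map w k : accepts_in (map_aut A) w k <-> accepts_in A w k.
Proof.
split=> [[q [acc_q C]]|[q [acc_q C]]]; exists q; split=> //; last first.
  by rewrite -f1; apply: comp_map.
by have [y /esym] := comp_map_inv C (esym f1); rewrite -f1 => /f_inj ->.
Qed.

End Automaton.

Lemma in_wlin_class_map (Sigma : finType) (L : language Sigma) :
  in_wlin_class G L -> in_wlin_class K L.
Proof.
case=> B [t [t_lin [recB boundB]]]; exists (map_aut B), t; split=> //; split.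
  by move=> w; rewrite recB; split=> [] [k /accepts_in_map acc]; exists k.
by move=> w /boundB [k [le_kt /accepts_in_map acc]]; exists k.
Qed.

End Transfer.

(** * Cutting accepting runs of F_2-automata *)

Lemma prefix_cat_diverge (T : eqType) (R p s t : seq T) :
  prefix R (p ++ s) -> ~~ prefix R (p ++ t) -> size p < size R.
Proof.
move=> Rps; apply: contraR; rewrite -leqNgt => le_Rp.
by move: Rps; rewrite !prefixE !takel_cat.
Qed.

Lemma common_prefix_branch (T : eqType) (u v : seq T) : exists P,
  [/\ prefix P u, prefix P v & P = u \/ exists a, prefix (rcons P a) u && ~~ prefix (rcons P a) v].
Proof.
elim: u v => [|a u IH] v; first by exists [::]; rewrite !prefix0s; split=> //; left.
case: v => [|b v].
  by exists [::]; rewrite !prefix0s; split=> //; right; exists a; rewrite /= prefix0s eqxx.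
have [<-|neq_ab] := eqVneq a b.
  have [P [Pu Pv branch]] := IH v; exists (a :: P); rewrite !prefix_cons eqxx Pu Pv.
  split=> //; case: branch => [->|[c Pc]]; first by left.
  by right; exists c; rewrite !prefix_cons eqxx.
exists [::]; rewrite !prefix0s; split=> //; right; exists a.
by rewrite !prefix_cons eqxx prefix0s (negbTE neq_ab).
Qed.

Definition prefix_within (R : seq letter) (d : nat) (s : seq letter) :=
  prefix R s && (size s < size R + d).

Lemma F2_mul_prefix_cross (R : seq letter) (d : nat) (x m : F2) : size (sval m) <= d ->
  prefix R (sval x) != prefix R (sval (F2mul x m)) ->
  prefix_within R d (sval x) || prefix_within R d (sval (F2mul x m)).
Proof.
(* [x] and [x m] share the prefix [x'], so whichever of them extends [R] exceeds it
   by less than the part of [m] that is cancelled or appended. *)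
move=> le_md; have [x' [c [m' [/= -> -> sz]]]] := foldr_ccons_split (sval m) (valP x).
rewrite -sz in le_md.
rewrite /prefix_within; case Rc: (prefix R (x' ++ c)); case Rm: (prefix R (x' ++ m')) => //= _.
  have lt_x'R : size x' < size R := prefix_cat_diverge Rc (negbT Rm).
  by rewrite size_cat; lia.
have lt_x'R : size x' < size R := prefix_cat_diverge Rm (negbT Rc).
by rewrite size_cat; lia.
Qed.

Section F2Automaton.
Variables (Sigma : finType) (A : Gautomaton F2_group Sigma).

Definition label_bound : nat :=
  \max_(q : state A) \max_(o : option Sigma) \max_(t <- delta A q o) size (sval (t.2 : F2)).
Local Notation M := label_bound.

Lemma size_label q o q' (m : F2) : (q', m) \in delta A q o -> size (sval m) <= M.
Proof.
move=> H; apply: leq_trans (leq_bigmax q); apply: leq_trans (leq_bigmax o).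
exact: (@leq_bigmax_seq _ _ xpredT (fun t : state A * F2 => size (sval t.2)) _ H).
Qed.

Lemma reach_F2mull (g : F2) q x w q' y :
  reach A q x w q' y -> reach A q (F2mul g x) w q' (F2mul g y).
Proof. exact: (reach_mull (G:=F2_group) F2_mulgA). Qed.

Lemma reach_F2mullK (g : F2) q x w q' y :
  reach A q (F2mul g x) w q' (F2mul g y) -> reach A q x w q' y.
Proof. exact: (reach_mullK (G:=F2_group) F2_mulgA F2_mul1g F2_mulVg). Qed.

Lemma reach_cross R q y w q' z : reach A q y w q' z ->
  prefix R (sval y) != prefix R (sval z) -> exists w1 w2 p x,
  [/\ w = w1 ++ w2, reach A q y w1 p x, reach A p x w2 q' z & prefix_within R M (sval x)].
Proof.
elim/reach_ind=> [q1 x1|q1 x1 o q2 m w1 q3 y3 H Rw IH]; first by rewrite eqxx.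
move=> cross; have [same|step] := eqVneq (prefix R (sval x1)) (prefix R (sval (F2mul x1 m))).
  have /IH [w2 [w3 [p [x [-> R2 R3 near]]]]] : prefix R (sval (F2mul x1 m)) != prefix R (sval y3).
    by rewrite -same.
  by exists (seq_of_opt o ++ w2), w3, p, x; rewrite catA; split=> //; apply: reach_cons H R2.
case/orP: (F2_mul_prefix_cross (size_label H) step) => near.
  exists [::], (seq_of_opt o ++ w1), q1, x1; split=> //; first exact: reach_nil.
  exact: reach_cons H Rw.
by exists (seq_of_opt o), w1, q2, (F2mul x1 m); split=> //; apply: reach_step.
Qed.

Definition anchored (P : seq letter) (x : F2) :=
  prefix P (sval x) && (size (sval x) <= size P + M).

Lemma reach_anchor R q y w q' z : reach A q y w q' z ->
  [|| prefix R (sval y) != prefix R (sval z), anchored R y | anchored R z] ->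
  exists w1 w2 p x, [/\ w = w1 ++ w2, reach A q y w1 p x, reach A p x w2 q' z & anchored R x].
Proof.
move=> Rw; case/or3P=> [/(reach_cross Rw)|anch|anch].
- by case=> w1 [w2 [p [x [-> R1 R2 /andP [Rx /ltnW]]]]]; exists w1, w2, p, x; rewrite /anchored Rx.
- by exists [::], w, q, y; split=> //; exact: reach_nil.
- by exists w, [::], q', z; rewrite cats0; split=> //; exact: reach_nil.
Qed.

Definition mark := (state A * M.-bseq letter)%type.

Definition mark_reg (t : mark) : F2 := insubd F2one (val t.2).

Lemma anchored_mark (P x : F2) p : anchored (sval P) x ->
  exists t : mark, t.1 = p /\ x = F2mul P (mark_reg t).
Proof.
case/andP=> /prefixP [e Ex] sz_x.
have red_Pe : reduced (sval P ++ e) by rewrite -Ex; exact: (svalP x).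
have red_e : reduced e by case: (cat_sorted2 red_Pe).
have sz_e : size e <= M by move: sz_x; rewrite Ex size_cat leq_add2l.
have reg_e : sval (mark_reg (p, insub_bseq M e)) = e.
  by rewrite /mark_reg /= !val_insubd sz_e /= red_e.
exists (p, insub_bseq M e); split=> //; apply: val_inj.
by rewrite /= reg_e Ex foldr_ccons_id.
Qed.

Definition outer_cut (v0 v3 : seq Sigma) (t1 t3 : mark) := exists (P : F2) qf,
  [/\ accepting A qf, reach A (q0 A) F2one v0 t1.1 (F2mul P (mark_reg t1))
    & reach A t3.1 (F2mul P (mark_reg t3)) v3 qf F2one].

Definition inner_cut (t t' : mark) (u : seq Sigma) :=
  reach A t.1 (mark_reg t) u t'.1 (mark_reg t').

Lemma cut_accepts v0 u1 u2 v3 t1 t2 t3 : outer_cut v0 v3 t1 t3 ->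
  inner_cut t1 t2 u1 -> inner_cut t2 t3 u2 -> accepts A (v0 ++ u1 ++ u2 ++ v3).
Proof.
case=> P [qf [acc_qf R0 R3]] R1 R2.
have [k C] : reach A (q0 A) F2one (v0 ++ u1 ++ u2 ++ v3) qf F2one.
  apply: reach_cat R0 _; apply: reach_cat (reach_F2mull P R1) _.
  exact: reach_cat (reach_F2mull P R2) R3.
by exists k, qf.
Qed.

Lemma reach_cut U V Z qf : accepting A qf -> reach A (q0 A) F2one (U ++ V ++ Z) qf F2one ->
  exists v0 a1 b1 b2 c1 v3 t1 t2 t3, [/\ U = v0 ++ a1, V = b1 ++ b2 & Z = c1 ++ v3] /\
  [/\ outer_cut v0 v3 t1 t3, inner_cut t1 t2 (a1 ++ b1) & inner_cut t2 t3 (b2 ++ c1)].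
Proof.
move=> acc_qf /reach_catP [r1 [x1 [RU /reach_catP [r2 [x2 [RV RZ]]]]]].
have [P [Px1 Px2 branch]] := common_prefix_branch (sval x1) (sval x2).
have red_P : reduced P by move: Px1 (svalP x1) => /prefixP [e ->] /cat_sorted2 [].
pose PF : F2 := exist _ P red_P.
have anchored_one : anchored P F2one = prefix P [::] by rewrite /anchored /= andbT.
have /(reach_anchor RU) [v0 [a1 [p1 [y1 [-> R0 R1 anch1]]]]] :
    [|| prefix P [::] != prefix P (sval x1), anchored P F2one | anchored P x1].
  by rewrite anchored_one Px1; case: (prefix P [::]).
have /(reach_anchor RZ) [c1 [v3 [p3 [y3 [-> R4 R5 anch3]]]]] :
    [|| prefix P (sval x2) != prefix P [::], anchored P x2 | anchored P F2one].
  by rewrite anchored_one Px2; case: (prefix P [::]); rewrite ?orbT.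
have [b1 [b2 [p2 [y2 [-> R2 R3 anch2]]]]] : exists b1 b2 p2 y2,
    [/\ V = b1 ++ b2, reach A r1 x1 b1 p2 y2, reach A p2 y2 b2 r2 x2 & anchored P y2].
  case: branch => [EP|[a /andP [Pa1 Pa2]]].
    exists [::], V, r1, x1; split=> //; first exact: reach_nil.
    by rewrite /anchored Px1 EP leq_addr.
  have /(reach_cross RV) [b1 [b2 [p2 [y2 [-> R2 R3 /andP [Pa_y2 sz_y2]]]]]] :
      prefix (rcons P a) (sval x1) != prefix (rcons P a) (sval x2) by rewrite Pa1 (negbTE Pa2).
  exists b1, b2, p2, y2; split=> //.
  rewrite size_rcons addSn ltnS in sz_y2.
  by rewrite /anchored (catl_prefix (s3 := [:: a])) ?cats1.
have [t1 [Ep1 Ey1]] := anchored_mark (P := PF) p1 anch1.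
have [t2 [Ep2 Ey2]] := anchored_mark (P := PF) p2 anch2.
have [t3 [Ep3 Ey3]] := anchored_mark (P := PF) p3 anch3.
subst p1 p2 p3 y1 y2 y3.
exists v0, a1, b1, b2, c1, v3, t1, t2, t3; split=> //; split; rewrite /inner_cut.
- by exists PF, qf.
- by apply: (reach_F2mullK (g := PF)); apply: reach_cat R1 R2.
- by apply: (reach_F2mullK (g := PF)); apply: reach_cat R3 R4.
Qed.

End F2Automaton.
Arguments outer_cut {Sigma} A v0 v3 t1 t3.
Arguments inner_cut {Sigma} A t t' u.

Lemma nat_pigeonhole (T : finType) (R : nat -> T -> Prop) :
  (forall n, exists t, R n t) -> exists n m t, [/\ n <> m, R n t & R m t].
Proof.
case/choice=> f Rf; pose g (i : 'I_#|T|.+1) := f i.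
have /injectivePn [i [j neq_ij eq_g]] : ~~ injectiveb g.
  by apply/injectiveP => /leq_card; rewrite card_ord ltnn.
exists i, j, (g i); split=> //; last by rewrite eq_g.
by move/val_inj => eq_ij; rewrite eq_ij eqxx in neq_ij.
Qed.

(** * The language a^n b^n c^n *)

Definition sa : 'I_3 := @Ordinal 3 0 isT.
Definition sb : 'I_3 := @Ordinal 3 1 isT.
Definition sc : 'I_3 := @Ordinal 3 2 isT.

Definition abc (i j k : nat) : seq 'I_3 := nseq i sa ++ nseq j sb ++ nseq k sc.

Definition abc_lang : language 'I_3 := fun w => exists n, w = abc n n n.

Lemma count_abc i j k : [/\ count_mem sa (abc i j k) = i,
  count_mem sb (abc i j k) = j & count_mem sc (abc i j k) = k].
Proof. by rewrite /abc !count_cat !count_nseq /= !mul1n !mul0n !addn0. Qed.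

Lemma abc_lang_abc i j k : abc_lang (abc i j k) -> i = j /\ j = k.
Proof.
case=> n E; have [ai bj ck] := count_abc i j k; have [an bn cn] := count_abc n n n.
by rewrite E an in ai; rewrite E bn in bj; rewrite E cn in ck; subst.
Qed.

Lemma abc_cat i1 i2 j1 j2 k1 k2 :
  nseq i1 sa ++ (nseq i2 sa ++ nseq j1 sb) ++ (nseq j2 sb ++ nseq k1 sc) ++ nseq k2 sc =
  abc (i1 + i2) (j1 + j2) (k1 + k2).
Proof. by rewrite /abc !nseqD !catA. Qed.

Lemma cat_eq_nseq (T : eqType) (s1 s2 : seq T) n x : s1 ++ s2 = nseq n x ->
  exists i j, [/\ s1 = nseq i x, s2 = nseq j x & i + j = n].
Proof.
move=> E; have := all_pred1_nseq x n.
rewrite -E all_cat => /andP [/all_pred1P E1 /all_pred1P E2].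
by exists (size s1), (size s2); rewrite -size_cat E size_nseq.
Qed.

Lemma I3_cases (s : 'I_3) : [\/ s = sa, s = sb | s = sc].
Proof.
by case: s => [[|[|[|//]]] Hs]; [constructor 1 | constructor 2 | constructor 3]; apply: val_inj.
Qed.

Lemma sorted_abc i j k : sorted (fun s t : 'I_3 => s <= t) (abc i j k).
Proof.
have pw n s : pairwise (fun s t : 'I_3 => s <= t) (nseq n s).
  by elim: n => //= n ->; rewrite all_nseq leqnn orbT.
rewrite (sorted_pairwise (fun _ _ _ => @leq_trans _ _ _)) !pairwise_cat !pw /allrel.
by rewrite !all_nseq /= !all_cat !all_nseq /= !orbT.
Qed.

Lemma sorted_abc_count (w : seq 'I_3) : sorted (fun s t : 'I_3 => s <= t) w ->
  w = abc (count_mem sa w) (count_mem sb w) (count_mem sc w).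
Proof.
move=> sorted_w; apply: (sorted_eq (fun _ _ _ => @leq_trans _ _ _)) sorted_w (sorted_abc _ _ _) _.
  by move=> s t /anti_leq /val_inj.
rewrite /perm_eq.
apply/allP => s _ /=.
have [ea eb ec] := count_abc (count_mem sa w) (count_mem sb w) (count_mem sc w).
by case: (I3_cases s) => ->; rewrite ?ea ?eb ?ec.
Qed.

Section NotF2.
Variable A : Gautomaton F2_group 'I_3.
Hypothesis recA : recognizes A abc_lang.

Definition abc_cut n (t : mark A * mark A * mark A) := exists i1 i2 j1 j2 k1 k2,
  [/\ i1 + i2 = n, j1 + j2 = n & k1 + k2 = n] /\
  [/\ outer_cut A (nseq i1 sa) (nseq k2 sc) t.1.1 t.2,
      inner_cut A t.1.1 t.1.2 (nseq i2 sa ++ nseq j1 sb)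
    & inner_cut A t.1.2 t.2 (nseq j2 sb ++ nseq k1 sc)].

Lemma abc_cut_exists n : exists t, abc_cut n t.
Proof.
have [k [qf [acc_qf C]]] : accepts A (abc n n n) by apply/recA; exists n.
have [v0 [a1 [b1 [b2 [c1 [v3 [t1 [t2 [t3 [[EU EV EZ] [out in1 in2]]]]]]]]]]] :=
  reach_cut acc_qf (ex_intro _ k C).
have [i1 [i2 [Ev0 Ea1 Ei]]] := cat_eq_nseq (esym EU).
have [j1 [j2 [Eb1 Eb2 Ej]]] := cat_eq_nseq (esym EV).
have [k1 [k2 [Ec1 Ev3 Ek]]] := cat_eq_nseq (esym EZ).
exists (t1, t2, t3), i1, i2, j1, j2, k1, k2; split=> //.
by rewrite -Ev0 -Ea1 -Eb1 -Eb2 -Ec1 -Ev3.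
Qed.

Lemma abc_cut_inj n m t : abc_cut n t -> abc_cut m t -> n = m.
Proof.
case: t => [[t1 t2] t3] [i1 [i2 [j1 [j2 [k1 [k2 [[Ei Ej Ek] [out in1 in2]]]]]]]].
case=> [i1' [i2' [j1' [j2' [k1' [k2' [[Ei' Ej' Ek'] [_ in1' in2']]]]]]]].
have /recA := cut_accepts out in1' in2; rewrite abc_cat => /abc_lang_abc [e1 e2].
have /recA := cut_accepts out in1 in2'; rewrite abc_cat => /abc_lang_abc [e3 e4].
lia.
Qed.

End NotF2.

Lemma abc_lang_notin_F2 : ~ in_wlin_class F2_group abc_lang.
Proof.
case=> A [_ [_ [recA _]]].
have [n [m [t [neq_nm cut_n cut_m]]]] := nat_pigeonhole (abc_cut_exists recA).
exact: neq_nm (abc_cut_inj recA cut_n cut_m).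
Qed.

(** * An F_2 x F_2-automaton for a^n b^n c^n *)

Notation F2xF2 := (prod_group F2_group F2_group).

Lemma iter_mulK (T : Type) (op : T -> T -> T) (e a b : T) :
  associative op -> right_id e op -> op a b = e ->
  forall n x, iter n (op^~ b) (iter n (op^~ a) x) = x.
Proof.
move=> opA op_e ab n x; elim: n => // n IH.
by rewrite iterSr iterS /= -opA ab op_e.
Qed.

Lemma iter_mul_id (T : Type) (op : T -> T -> T) (e : T) :
  right_id e op -> forall n x, iter n (op^~ e) x = x.
Proof. by move=> op_e n x; elim: n => //= n ->. Qed.

Lemma iter_prod_mul (G K : group) n (m : gcar (prod_group G K)) x :
  iter n (fun y => @gmul (prod_group G K) y m) x =
  (iter n (fun y => gmul y m.1) x.1, iter n (fun y => gmul y m.2) x.2).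
Proof. by elim: n => [|n /= ->] //; case: x. Qed.

Definition F2a : F2 := exist _ [:: (false, false)] isT.

Lemma F2a_mulgV : F2mul F2a (F2inv F2a) = F2one.
Proof. exact: val_inj. Qed.

Definition abc_label (s : 'I_3) : F2 * F2 :=
  if s == sa then (F2a, F2one) else if s == sb then (F2inv F2a, F2a) else (F2one, F2inv F2a).

Definition abc_delta (q : 'I_3) (o : option 'I_3) : seq ('I_3 * (F2 * F2)) :=
  if o is Some s then (if q <= s then [:: (s, abc_label s)] else [::]) else [::].

Definition abc_aut : Gautomaton F2xF2 'I_3 :=
  @GAut F2xF2 'I_3 'I_3 abc_delta sa predT.

Lemma abc_deltaP q o q' m : (q', m) \in abc_delta q o ->
  exists2 s, o = Some s & [/\ q <= s, q' = s & m = abc_label s].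
Proof.
by case: o => [s|] //=; case: ifP => // le_qs; rewrite mem_seq1 => /eqP [-> ->]; exists s.
Qed.

Lemma comp_abc_path q x w k q' y : comp abc_aut q x w k q' y ->
  path (fun s t : 'I_3 => s <= t) q w.
Proof.
elim=> {q x w k q' y} [//|q x s w k q1 m q' y H _ IH|q x w k q1 m q' y H _ _].
  by case/abc_deltaP: H => _ [<-] [le_qs Eq1 _]; rewrite /= le_qs -Eq1.
by case/abc_deltaP: H.
Qed.

Lemma comp_abc_exp_sum q x w k q' y : comp abc_aut q x w k q' y ->
  (exp_sum false (sval y.1) =
     exp_sum false (sval x.1) + (count_mem sa w)%:Z - (count_mem sb w)%:Z)%R /\
  (exp_sum false (sval y.2) =
     exp_sum false (sval x.2) + (count_mem sb w)%:Z - (count_mem sc w)%:Z)%R.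
Proof.
elim=> {q x w k q' y} [q x|q x s w k q1 m q' y H _ [IH1 IH2]|q x w k q1 m q' y /abc_deltaP []//].
  by rewrite /=; lia.
move: IH1 IH2; case/abc_deltaP: H => _ [<-] [_ _ ->]; rewrite /= !exp_sum_mul.
have exp_F2a : (exp_sum false (sval F2a) = 1)%R by rewrite /exp_sum big_cons big_nil.
have exp_F2ai : (exp_sum false (sval (F2inv F2a)) = -1)%R by rewrite /exp_sum big_cons big_nil.
have exp_1 : (exp_sum false (sval F2one) = 0)%R by rewrite /exp_sum big_nil.
(* [congr] first: the registers occur in convertible but syntactically different
   forms, which [lia] would take for distinct atoms. *)
by case: (I3_cases s) => ->; rewrite /abc_label /= ?exp_F2a ?exp_F2ai ?exp_1 => -> ->;
  split; rewrite -!addrA; congr (_ + _)%R; lia.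
Qed.

Lemma comp_abc_nseq (q s : 'I_3) x n : q <= s -> exists2 q' : 'I_3, q' <= s &
  comp abc_aut q x (nseq n s) n q' (iter n (fun y : gcar F2xF2 => gmul y (abc_label s)) x).
Proof.
elim: n q x => [|n IH] q x le_qs; first by exists q => //; apply: comp_nil.
have [q' le_q's C] := IH s (gmul (x : gcar F2xF2) (abc_label s)) (leqnn s).
exists q' => //; rewrite iterSr; apply: comp_read C.
by rewrite /= le_qs mem_seq1.
Qed.

Lemma abc_aut_accepts n : accepts_in abc_aut (abc n n n) (n + (n + n)).
Proof.
pose X := iter n (F2mul^~ F2a) F2one.
have [q1 le_q1a Ca] := comp_abc_nseq (F2one, F2one) n (leqnn sa).
have [q2 le_q2b Cb] := comp_abc_nseq (X, F2one) n (leq_trans le_q1a (isT : sa <= sb)).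
have [q3 _ Cc] := comp_abc_nseq (F2one, X) n (leq_trans le_q2b (isT : sb <= sc)).
rewrite iter_prod_mul /= (iter_mul_id F2_mulg1) in Ca.
rewrite iter_prod_mul /= (iter_mulK F2_mulgA F2_mulg1 F2a_mulgV) in Cb.
rewrite iter_prod_mul /= (iter_mul_id F2_mulg1) (iter_mulK F2_mulgA F2_mulg1 F2a_mulgV) in Cc.
by exists q3; split=> //; apply: comp_cat Ca (comp_cat Cb Cc).
Qed.

Lemma abc_aut_recognizes : recognizes abc_aut abc_lang.
Proof.
move=> w; split=> [[n ->]|[k [q [_ C]]]]; first by exists (n + (n + n)); apply: abc_aut_accepts.
have /path_sorted/sorted_abc_count Ew := comp_abc_path C.
have [] := comp_abc_exp_sum C; rewrite /= /exp_sum big_nil => ea eb.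
move: ea eb; rewrite !add0r => /esym/eqP ea /esym/eqP eb.
rewrite subr_eq0 eqz_nat in ea; rewrite subr_eq0 eqz_nat in eb.
by exists (count_mem sa w); rewrite {1}Ew -(eqP eb) -(eqP ea).
Qed.

Lemma abc_lang_in_F2xF2 : in_wlin_class F2xF2 abc_lang.
Proof.
exists abc_aut, id; split; first by exists 1, 0 => n _; rewrite mul1n.
split=> [|w [n ->]]; first exact: abc_aut_recognizes.
exists (n + (n + n)); split; last exact: abc_aut_accepts.
by rewrite /abc !size_cat !size_nseq.
Qed.

Theorem theorem4p15 :
  (forall (Sigma : finType) (L : language Sigma),
      in_wlin_class F2_group L -> in_wlin_class (prod_group F2_group F2_group) L)
  /\
  (exists (Sigma : finType) (L : language Sigma),
      in_wlin_class (prod_group F2_group F2_group) L /\ ~ in_wlin_class F2_group L).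
Proof.
split; last by exists 'I_3, abc_lang; split; [exact: abc_lang_in_F2xF2 | exact: abc_lang_notin_F2].
move=> Sigma L.
apply: (in_wlin_class_map (G := F2_group) (K := F2xF2) (f := fun x => (x, F2one))) => //.
- by move=> x y; rewrite /= F2_mul1g.
- by move=> x y [].
Qed.
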